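(* For every integer $n\ge 3$ and every $x>0$, $$\frac{n-2}{n-1}<\frac{\bigl(\psi_2^{(n)}(x)\bigr)^2}{\psi_2^{(n-1)}(x)\,\psi_2^{(n+1)}(x)}<\frac{n}{n+1}.$$ Both bounds are sharp: the lower constant $\frac{n-2}{n-1}$ cannot be replaced by any larger constant and the upper constant $\frac{n}{n+1}$ cannot be replaced by any smaller constant, uniformly in $x>0$.
   Context: For an integer $n\ge 2$ and $x>0$, the poly-double gamma function is defined by $$\psi_2^{(n)}(x)=(-1)^{n+1}\,n!\sum_{k=0}^{\infty}\frac{1+k}{(x+k)^{n+1}} .$$ *)

From Stdlib Require Import Reals.
From Coquelicot Require Import Coquelicot.
Open Scope R_scope.

(* Coquelicot's [Series] is the (total) sum of the series; the series
   converges for n >= 2, x > 0. *)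
Definition psi2 (n : nat) (x : R) : R :=
  (-1) ^ (n + 1) * INR (Factorial.fact n) *
  Series (fun k : nat => (1 + INR k) / (x + INR k) ^ (n + 1)).

Definition psi2_ratio (n : nat) (x : R) : R :=
  (psi2 n x) ^ 2 / (psi2 (n - 1) x * psi2 (n + 1) x).

(* Write J n x := n! sum_k (1 + k) / (x + k) ^ (n + 1) (= |psi2 n x|, [psi2_abs n x]
   below). Expanding 1 / (1 - e^-t) ^ 2 = sum_k (1 + k) e^(-k t),

     J n x = int_0^oo t ^ n e^(-x t) / (1 - e^-t) ^ 2 dt.

   Differentiating t ^ (n + 1) e^(-x t) / (1 - e^-t) ^ 2 and integrating over
   ]0, +oo[ computes the integrals of phi t = 2/t - 2/(e^t - 1) and of
   x + 2/(e^t - 1) against the weight t ^ n e^(-x t) / (1 - e^-t) ^ 2 (and against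
   t times it) in terms of J (n - 1) x, J n x and J (n + 1) x. Both functions are
   decreasing, so Chebyshev's integral inequality gives the lower and the upper
   bound respectively. Sharpness comes from the two regimes
   J n x ~ (n - 2)! / x ^ (n - 1) as x -> +oo and J n x ~ n! / x ^ (n + 1) as
   x -> 0, in which the ratio tends to (n - 2)/(n - 1) and n/(n + 1). *)

From Stdlib Require Import Reals Lra Lia Factorial.
From Coquelicot Require Import Coquelicot.
Open Scope R_scope.

(* [auto_derive] states its side equalities in a Coquelicot carrier that is
   only convertible to [R], which [field] does not recognise. *)
Ltac field_R := match goal with |- ?a = ?b => change (@eq R a b) end; field.

Definition gamma_kernel (c : R) (M : nat) (t : R) : R := t ^ M * exp (- (c * t)).

(* Closed form of the integral of [gamma_kernel c M] over [t, +oo[, obtained by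
   repeated integration by parts. *)
Fixpoint gamma_tail (c : R) (M : nat) (t : R) : R :=
  match M with
  | O => exp (- (c * t)) / c
  | S M' => t ^ S M' * exp (- (c * t)) / c + INR (S M') / c * gamma_tail c M' t
  end.

Lemma is_derive_gamma_tail c M t :
  c <> 0 -> is_derive (gamma_tail c M) t (- gamma_kernel c M t).
Proof.
  intros Hc. induction M as [|M IH]; unfold gamma_kernel in *.
  - cbn [gamma_tail]. auto_derive; [easy|]. field_R. easy.
  - assert (Hhead : is_derive (fun t => t ^ S M * exp (- (c * t)) / c) t
                   (INR (S M) * t ^ M * exp (- (c * t)) / c - t ^ S M * exp (- (c * t)))).
    { auto_derive; [easy|].
      change (match M with 0%nat => 1 | S _ => INR M + 1 end) with (INR (S M)).
      simpl. field_R. easy. }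
    replace (- (t ^ S M * exp (- (c * t))))
      with (plus (INR (S M) * t ^ M * exp (- (c * t)) / c - t ^ S M * exp (- (c * t)))
                 (scal (INR (S M) / c) (- (t ^ M * exp (- (c * t)))))).
    + exact (is_derive_plus _ _ _ _ _ Hhead (is_derive_scal _ _ _ _ IH)).
    + unfold plus, scal; simpl; unfold mult; simpl. field. easy.
Qed.

Lemma gamma_tail_0 c M : c <> 0 -> gamma_tail c M 0 = INR (fact M) / c ^ S M.
Proof.
  intros Hc. induction M as [|M IH]; cbn [gamma_tail].
  - rewrite Rmult_0_r, Ropp_0, exp_0. simpl. field. easy.
  - rewrite IH, pow_i, fact_simpl, mult_INR by lia.
    simpl pow. field. split; [apply pow_nonzero|]; easy.
Qed.

Lemma gamma_tail_ge0 c M t : 0 < c -> 0 <= t -> 0 <= gamma_tail c M t.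
Proof.
  intros Hc Ht. assert (He := exp_pos (- (c * t))).
  induction M as [|M IH]; cbn [gamma_tail].
  - apply Rle_mult_inv_pos; lra.
  - assert (0 <= t ^ S M) by (apply pow_le; lra).
    assert (0 <= INR (S M) / c) by (apply Rle_mult_inv_pos; [apply pos_INR | easy]).
    apply Rplus_le_le_0_compat; [apply Rle_mult_inv_pos|]; nra.
Qed.

Lemma exp_le_exp x y : x <= y -> exp x <= exp y.
Proof. intros [H | ->]; [left; apply exp_increasing|]; lra. Qed.

Lemma gamma_tail_le_param c d M t :
  0 < c -> c <= d -> 0 <= t -> gamma_tail d M t <= gamma_tail c M t.
Proof.
  intros Hc Hcd Ht.
  assert (Hinv : / d <= / c) by (apply Rinv_le_contravar; lra).
  assert (Hexp : exp (- (d * t)) <= exp (- (c * t))) by (apply exp_le_exp; nra).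
  assert (0 < / d) by (apply Rinv_0_lt_compat; lra).
  assert (0 < exp (- (d * t))) by apply exp_pos.
  induction M as [|M IH]; cbn [gamma_tail]; unfold Rdiv.
  - apply Rmult_le_compat; lra.
  - assert (0 <= t ^ S M) by (apply pow_le; lra).
    assert (0 <= INR (S M)) by apply pos_INR.
    assert (0 <= gamma_tail d M t) by (apply gamma_tail_ge0; lra).
    apply Rplus_le_compat; apply Rmult_le_compat; try apply Rmult_le_compat; nra.
Qed.

Lemma pow_le_fact_mul_exp y k : 0 <= y -> y ^ k <= INR (fact k) * exp y.
Proof.
  intros Hy. assert (Htaylor := exp_ge_taylor y k Hy).
  assert (Hfact := INR_fact_lt_0 k).
  destruct k as [|k]; cbn [sum_f_R0] in Htaylor.
  - simpl in *. lra.
  - assert (0 <= sum_f_R0 (fun i => y ^ i / INR (fact i)) k).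
    { apply cond_pos_sum. intros i. apply Rle_mult_inv_pos; [apply pow_le; lra | apply INR_fact_lt_0]. }
    assert (Hterm : y ^ S k / INR (fact (S k)) <= exp y) by lra.
    apply (Rmult_le_compat_l (INR (fact (S k)))) in Hterm; [|lra].
    replace (INR (fact (S k)) * (y ^ S k / INR (fact (S k)))) with (y ^ S k) in Hterm
      by (field; lra).
    exact Hterm.
Qed.

Lemma pow_mul_exp_le c k t : 0 < c -> 0 < t ->
  t ^ k * exp (- (c * t)) <= INR (fact (S k)) / (c ^ S k * t).
Proof.
  intros Hc Ht.
  assert (H := pow_le_fact_mul_exp (c * t) (S k) ltac:(nra)).
  assert (0 < c ^ S k) by (apply pow_lt; lra).
  assert (0 < exp (c * t)) by apply exp_pos.
  assert (0 < c ^ S k * t * exp (c * t)) by (apply Rmult_lt_0_compat; [apply Rmult_lt_0_compat|]; lra).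
  rewrite exp_Ropp. apply (Rmult_le_reg_r (c ^ S k * t * exp (c * t))); [lra|].
  replace (t ^ k * / exp (c * t) * (c ^ S k * t * exp (c * t))) with ((c * t) ^ S k)
    by (rewrite Rpow_mult_distr; simpl; field; lra).
  replace (INR (fact (S k)) / (c ^ S k * t) * (c ^ S k * t * exp (c * t)))
    with (INR (fact (S k)) * exp (c * t)) by (field; lra).
  exact H.
Qed.

Lemma gamma_tail_le_div c M : 0 < c ->
  exists Q, forall b, 0 < b -> gamma_tail c M b <= Q / b.
Proof.
  intros Hc. assert (Hic : 0 < / c) by (apply Rinv_0_lt_compat; lra).
  induction M as [|M [Q HQ]]; cbn [gamma_tail].
  - exists (INR (fact 1) / c ^ 1 / c). intros b Hb.
    assert (H := pow_mul_exp_le c 0 b Hc Hb). rewrite pow_O, Rmult_1_l in H.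
    replace (INR (fact 1) / c ^ 1 / c / b) with (INR (fact 1) / (c ^ 1 * b) / c) by (field; lra).
    unfold Rdiv. apply Rmult_le_compat_r; lra.
  - exists (INR (fact (S (S M))) / c ^ S (S M) / c + INR (S M) / c * Q). intros b Hb.
    assert (H := pow_mul_exp_le c (S M) b Hc Hb).
    assert (0 <= INR (S M) / c) by (apply Rle_mult_inv_pos; [apply pos_INR | lra]).
    replace ((INR (fact (S (S M))) / c ^ S (S M) / c + INR (S M) / c * Q) / b)
      with (INR (fact (S (S M))) / (c ^ S (S M) * b) / c + INR (S M) / c * (Q / b))
      by (field; repeat split; try apply pow_nonzero; lra).
    apply Rplus_le_compat.
    + unfold Rdiv. apply Rmult_le_compat_r; lra.
    + apply Rmult_le_compat_l; auto.
Qed.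

Lemma gamma_tail_vanishes c M eps : 0 < c -> 0 < eps ->
  exists B, forall b, B <= b -> gamma_tail c M b < eps.
Proof.
  intros Hc Heps. destruct (gamma_tail_le_div c M Hc) as [Q HQ].
  assert (0 <= Rabs Q / eps) by (apply Rle_mult_inv_pos; [apply Rabs_pos | lra]).
  exists (Rabs Q / eps + 1). intros b Hb.
  apply Rle_lt_trans with (Rabs Q / b).
  - apply Rle_trans with (Q / b); [apply HQ; lra|].
    unfold Rdiv. apply Rmult_le_compat_r; [left; apply Rinv_0_lt_compat; lra | apply Rle_abs].
  - apply (Rmult_lt_reg_r b); [lra|].
    replace (Rabs Q / b * b) with (Rabs Q / eps * eps) by (field; lra). nra.
Qed.

Lemma continuous_gamma_kernel c M t : continuous (gamma_kernel c M) t.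
Proof.
  apply (ex_derive_continuous (K := R_AbsRing) (V := R_NormedModule)).
  unfold gamma_kernel. auto_derive. easy.
Qed.

Lemma is_RInt_gamma_kernel c M a b : c <> 0 ->
  is_RInt (gamma_kernel c M) a b (gamma_tail c M a - gamma_tail c M b).
Proof.
  intros Hc.
  replace (gamma_tail c M a - gamma_tail c M b)
    with (minus (- gamma_tail c M b) (- gamma_tail c M a)) by (unfold minus, plus, opp; simpl; ring).
  apply (is_RInt_derive (fun t => - gamma_tail c M t)).
  - intros t _. replace (gamma_kernel c M t) with (opp (- gamma_kernel c M t))
      by (unfold opp; simpl; ring).
    apply (is_derive_opp (gamma_tail c M)), is_derive_gamma_tail, Hc.
  - intros t _. apply continuous_gamma_kernel.
Qed.

Lemma gamma_kernel_ge0 c M t : 0 <= t -> 0 <= gamma_kernel c M t.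
Proof.
  intros Ht. unfold gamma_kernel.
  apply Rmult_le_pos; [apply pow_le; lra | apply Rlt_le, exp_pos].
Qed.

Lemma gamma_tail_decr c M a b : 0 < c -> 0 <= a <= b -> gamma_tail c M b <= gamma_tail c M a.
Proof.
  intros Hc Hab.
  assert (0 <= gamma_tail c M a - gamma_tail c M b); [|lra].
  apply (is_RInt_ge_0 (gamma_kernel c M) a b); [lra | apply is_RInt_gamma_kernel; lra |].
  intros t Ht. apply gamma_kernel_ge0. lra.
Qed.

Lemma gamma_tail_near_0 c M a : 0 < c -> 0 <= a <= 1 ->
  gamma_tail c M 0 - gamma_tail c M a <= a.
Proof.
  intros Hc Ha.
  replace a with (scal (a - 0) 1) at 2 by (unfold scal; simpl; unfold mult; simpl; ring).
  apply (is_RInt_le (gamma_kernel c M) (fun _ => 1) 0 a); try lra.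
  - apply is_RInt_gamma_kernel. lra.
  - apply (is_RInt_const (V := R_NormedModule)).
  - intros t Ht. unfold gamma_kernel.
    assert (t ^ M <= 1) by (rewrite <- (pow1 M); apply pow_incr; lra).
    assert (exp (- (c * t)) <= 1) by (rewrite <- exp_0; apply exp_le_exp; nra).
    assert (0 <= t ^ M) by (apply pow_le; lra).
    assert (0 <= exp (- (c * t))) by (apply Rlt_le, exp_pos).
    nra.
Qed.

Definition is_RInt_0_infty (f : R -> R) (I : R) : Prop :=
  forall eps, 0 < eps -> exists d B, 0 < d /\ d < B /\
    forall a b, 0 < a <= d -> B <= b -> ex_RInt f a b /\ Rabs (RInt f a b - I) < eps.

Lemma is_RInt_0_infty_common f I g J eps :
  is_RInt_0_infty f I -> is_RInt_0_infty g J -> 0 < eps ->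
  exists d B, 0 < d /\ d < B /\ forall a b, 0 < a <= d -> B <= b ->
    (ex_RInt f a b /\ Rabs (RInt f a b - I) < eps) /\
    (ex_RInt g a b /\ Rabs (RInt g a b - J) < eps).
Proof.
  intros Hf Hg Heps.
  destruct (Hf eps Heps) as (d1 & B1 & Hd1 & HdB1 & H1).
  destruct (Hg eps Heps) as (d2 & B2 & Hd2 & HdB2 & H2).
  assert (Hd := Rmin_l d1 d2). assert (Hd' := Rmin_r d1 d2).
  assert (HB := Rmax_l B1 B2). assert (HB' := Rmax_r B1 B2).
  exists (Rmin d1 d2), (Rmax B1 B2). split; [apply Rmin_pos; lra|]. split; [lra|].
  intros a b Ha Hb. split; [apply H1 | apply H2]; lra.
Qed.

Lemma is_RInt_0_infty_plus f I g J :
  is_RInt_0_infty f I -> is_RInt_0_infty g J -> is_RInt_0_infty (fun t => f t + g t) (I + J).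
Proof.
  intros Hf Hg eps Heps.
  destruct (is_RInt_0_infty_common f I g J (eps / 2) Hf Hg ltac:(lra))
    as (d & B & Hd & HdB & H).
  exists d, B. split; [easy|]. split; [easy|]. intros a b Ha Hb.
  destruct (H a b Ha Hb) as [[Exf Hf'] [Exg Hg']]. split.
  - apply (ex_RInt_plus f g); easy.
  - rewrite (RInt_plus f g) by easy. unfold plus; simpl.
    replace (RInt f a b + RInt g a b - (I + J)) with ((RInt f a b - I) + (RInt g a b - J)) by ring.
    eapply Rle_lt_trans; [apply Rabs_triang | lra].
Qed.

Lemma is_RInt_0_infty_scal f I k :
  is_RInt_0_infty f I -> is_RInt_0_infty (fun t => k * f t) (k * I).
Proof.
  intros Hf eps Heps. assert (Hk := Rabs_pos k).
  destruct (Hf (eps / (Rabs k + 1))) as (d & B & Hd & HdB & H).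
  { apply Rdiv_lt_0_compat; lra. }
  exists d, B. split; [easy|]. split; [easy|]. intros a b Ha Hb.
  destruct (H a b Ha Hb) as [Ex Herr]. split.
  - apply (ex_RInt_scal f); easy.
  - rewrite (RInt_scal f) by easy. unfold scal; simpl; unfold mult; simpl.
    replace (k * RInt f a b - k * I) with (k * (RInt f a b - I)) by ring.
    rewrite Rabs_mult.
    apply Rle_lt_trans with ((Rabs k + 1) * Rabs (RInt f a b - I)).
    + assert (0 <= Rabs (RInt f a b - I)) by apply Rabs_pos. nra.
    + apply (Rmult_lt_compat_l (Rabs k + 1)) in Herr; [|lra].
      replace ((Rabs k + 1) * (eps / (Rabs k + 1))) with eps in Herr by (field; lra). easy.
Qed.

Lemma is_RInt_0_infty_ext f g I :
  (forall t, 0 < t -> f t = g t) -> is_RInt_0_infty f I -> is_RInt_0_infty g I.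
Proof.
  intros Hfg Hf eps Heps. destruct (Hf eps Heps) as (d & B & Hd & HdB & H).
  exists d, B. split; [easy|]. split; [easy|]. intros a b Ha Hb.
  destruct (H a b Ha Hb) as [Ex Herr].
  assert (Hext : forall t, Rmin a b < t < Rmax a b -> f t = g t).
  { intros t Ht. rewrite Rmin_left, Rmax_right in Ht by lra. apply Hfg. lra. }
  split.
  - apply (ex_RInt_ext f); easy.
  - rewrite <- (RInt_ext f g) by easy. easy.
Qed.

Lemma is_RInt_0_infty_le f g I J :
  (forall t, 0 < t -> f t <= g t) -> is_RInt_0_infty f I -> is_RInt_0_infty g J -> I <= J.
Proof.
  intros Hfg Hf Hg. apply Rnot_lt_le. intros HJI.
  destruct (is_RInt_0_infty_common f I g J ((I - J) / 2) Hf Hg ltac:(lra))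
    as (d & B & Hd & HdB & H).
  destruct (H d B ltac:(lra) ltac:(lra)) as [[Exf Herrf] [Exg Herrg]].
  assert (RInt f d B <= RInt g d B) by (apply RInt_le; try easy; [lra | intros t Ht; apply Hfg; lra]).
  apply Rabs_def2 in Herrf. apply Rabs_def2 in Herrg. lra.
Qed.

Lemma is_RInt_0_infty_RInt_le f I c d :
  (forall t, 0 < t -> 0 <= f t) -> is_RInt_0_infty f I -> 0 < c < d -> ex_RInt f c d ->
  RInt f c d <= I.
Proof.
  intros Hpos Hf Hcd Hex. apply Rnot_lt_le. intros HI.
  destruct (Hf ((RInt f c d - I) / 2) ltac:(lra)) as (d0 & B & Hd0 & HdB & H).
  assert (Ha := Rmin_l d0 c). assert (Hac := Rmin_r d0 c).
  assert (Hb := Rmax_l B d). assert (Hdb := Rmax_r B d).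
  assert (Ha0 : 0 < Rmin d0 c) by (apply Rmin_pos; lra).
  set (a := Rmin d0 c) in *. set (b := Rmax B d) in *.
  destruct (H a b ltac:(lra) ltac:(lra)) as [Ex Herr].
  assert (Exac : ex_RInt f a c) by (apply (ex_RInt_Chasles_1 f a c b); [lra | easy]).
  assert (Excb : ex_RInt f c b) by (apply (ex_RInt_Chasles_2 f a c b); [lra | easy]).
  assert (Exdb : ex_RInt f d b) by (apply (ex_RInt_Chasles_2 f c d b); [lra | easy]).
  rewrite <- (RInt_Chasles f a c b Exac Excb) in Herr.
  rewrite <- (RInt_Chasles f c d b Hex Exdb) in Herr.
  unfold plus in Herr; simpl in Herr.
  assert (0 <= RInt f a c) by (apply RInt_ge_0; [lra | easy | intros; apply Hpos; lra]).
  assert (0 <= RInt f d b) by (apply RInt_ge_0; [lra | easy | intros; apply Hpos; lra]).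
  apply Rabs_def2 in Herr. lra.
Qed.

Lemma is_RInt_0_infty_gt0 f I c d :
  (forall t, 0 < t -> 0 <= f t) -> (forall t, c <= t <= d -> continuous f t) ->
  (forall t, c < t < d -> 0 < f t) -> 0 < c < d -> is_RInt_0_infty f I -> 0 < I.
Proof.
  intros Hpos Hcont Hcd Hc Hf.
  assert (Hex : ex_RInt f c d).
  { apply (ex_RInt_continuous (V := R_CompleteNormedModule)). intros t Ht.
    rewrite Rmin_left, Rmax_right in Ht by lra. apply Hcont. lra. }
  assert (Hle := is_RInt_0_infty_RInt_le f I c d Hpos Hf Hc Hex).
  assert (Hlt : RInt (fun _ => 0) c d < RInt f c d).
  { apply RInt_lt; [lra | easy | intros; apply continuous_const | easy]. }
  rewrite RInt_const in Hlt. unfold scal in Hlt; simpl in Hlt; unfold mult in Hlt; simpl in Hlt.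
  lra.
Qed.

Lemma is_RInt_0_infty_derive (F f : R -> R) (F0 Finf : R) :
  (forall t, 0 < t -> is_derive F t (f t)) -> (forall t, 0 < t -> continuous f t) ->
  (forall eps, 0 < eps -> exists d, 0 < d /\ forall a, 0 < a <= d -> Rabs (F a - F0) < eps) ->
  (forall eps, 0 < eps -> exists B, forall b, B <= b -> Rabs (F b - Finf) < eps) ->
  is_RInt_0_infty f (Finf - F0).
Proof.
  intros Hder Hcont H0 Hinf eps Heps.
  destruct (H0 (eps / 2) ltac:(lra)) as (d & Hd & Hnear0).
  destruct (Hinf (eps / 2) ltac:(lra)) as (B & Hnearinf).
  assert (Hd1 := Rmin_l d 1). assert (Hd2 := Rmin_r d 1).
  assert (HB1 := Rmax_l B 2). assert (HB2 := Rmax_r B 2).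
  exists (Rmin d 1), (Rmax B 2). split; [apply Rmin_pos; lra|]. split; [lra|].
  intros a b Ha Hb.
  assert (HI : is_RInt f a b (minus (F b) (F a))).
  { apply (is_RInt_derive F f); intros t Ht; rewrite Rmin_left, Rmax_right in Ht by lra;
      [apply Hder | apply Hcont]; lra. }
  split; [eexists; eauto|].
  rewrite (is_RInt_unique _ _ _ _ HI). unfold minus, plus, opp; simpl.
  specialize (Hnear0 a ltac:(lra)). specialize (Hnearinf b ltac:(lra)).
  replace (F b + - F a - (Finf - F0)) with ((F b - Finf) - (F a - F0)) by ring.
  eapply Rle_lt_trans; [apply Rabs_triang|]. rewrite Rabs_Ropp. lra.
Qed.

Section Chebyshev.

Variables w g : R -> R.
Hypotheses (Hw : forall t, 0 < t -> 0 < w t) (Hwc : forall t, 0 < t -> continuous w t)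
  (Hgc : forall t, 0 < t -> continuous g t) (Hg : forall s t, 0 < s -> s < t -> g t < g s).

Let chebyshev_integrand (m t : R) : R := w t * (t - m) * (g m - g t).

Lemma chebyshev_integrand_ge0 m t : 0 < m -> 0 < t -> 0 <= chebyshev_integrand m t.
Proof.
  intros Hm Ht. unfold chebyshev_integrand. assert (Hwt := Hw t Ht).
  destruct (Rtotal_order t m) as [Hlt | [-> | Hgt]].
  - assert (g m < g t) by (apply Hg; lra). assert (0 < (m - t) * (g t - g m)) by nra.
    replace (w t * (t - m) * (g m - g t)) with (w t * ((m - t) * (g t - g m))) by ring. nra.
  - rewrite Rminus_diag, Rmult_0_r, Rmult_0_l. lra.
  - assert (g t < g m) by (apply Hg; lra). assert (0 < (t - m) * (g m - g t)) by nra. nra.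
Qed.

Lemma continuous_chebyshev_integrand m t : 0 < m -> 0 < t ->
  continuous (chebyshev_integrand m) t.
Proof.
  intros Hm Ht.
  apply (continuous_mult (K := R_AbsRing) (fun t => w t * (t - m)) (fun t => g m - g t)).
  - apply (continuous_mult (K := R_AbsRing) w (fun t => t - m)); [apply Hwc, Ht|].
    apply (continuous_minus (V := R_NormedModule) (fun t => t) (fun _ => m));
      [apply continuous_id | apply continuous_const].
  - apply (continuous_minus (V := R_NormedModule) (fun _ => g m) g);
      [apply continuous_const | apply Hgc, Ht].
Qed.

(* Chebyshev's integral inequality for the increasing [t] and the decreasing [g]:
   with [m := A1 / A0] the barycentre of the weight [w], the nonnegative
   [chebyshev_integrand m] integrates to [m * B0 - B1]. *)
Lemma is_RInt_0_infty_chebyshev A0 A1 B0 B1 :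
  is_RInt_0_infty w A0 -> is_RInt_0_infty (fun t => t * w t) A1 ->
  is_RInt_0_infty (fun t => g t * w t) B0 -> is_RInt_0_infty (fun t => t * (g t * w t)) B1 ->
  A0 * B1 < A1 * B0.
Proof.
  intros IA0 IA1 IB0 IB1.
  assert (HA0 : 0 < A0).
  { apply (is_RInt_0_infty_gt0 w A0 1 2); [| | | lra | easy]; intros t Ht.
    - left. apply Hw, Ht.
    - apply Hwc. lra.
    - apply Hw. lra. }
  assert (HA1 : 0 < A1).
  { apply (is_RInt_0_infty_gt0 (fun t => t * w t) A1 1 2); [| | | lra | easy]; intros t Ht.
    - assert (Hwt := Hw t Ht). nra.
    - apply (continuous_mult (K := R_AbsRing) (fun t => t) w);
        [apply continuous_id | apply Hwc; lra].
    - assert (Hwt := Hw t ltac:(lra)). nra. }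
  set (m := A1 / A0).
  assert (Hm : 0 < m) by (apply Rdiv_lt_0_compat; easy).
  assert (Ih : is_RInt_0_infty (chebyshev_integrand m) (- B1 + m * B0 + g m * A1 - m * g m * A0)).
  { assert (I := is_RInt_0_infty_plus _ _ _ _
      (is_RInt_0_infty_plus _ _ _ _
        (is_RInt_0_infty_plus _ _ _ _ (is_RInt_0_infty_scal _ _ (-1) IB1)
                                      (is_RInt_0_infty_scal _ _ m IB0))
        (is_RInt_0_infty_scal _ _ (g m) IA1))
      (is_RInt_0_infty_scal _ _ (- (m * g m)) IA0)).
    replace (- B1 + m * B0 + g m * A1 - m * g m * A0)
      with (-1 * B1 + m * B0 + g m * A1 + - (m * g m) * A0) by ring.
    eapply is_RInt_0_infty_ext; [|exact I]. intros t Ht. unfold chebyshev_integrand. ring. }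
  assert (Hh : 0 < - B1 + m * B0 + g m * A1 - m * g m * A0).
  { apply (is_RInt_0_infty_gt0 _ _ (m + 1) (m + 2) (fun t Ht => chebyshev_integrand_ge0 m t Hm Ht));
      [intros t Ht; apply continuous_chebyshev_integrand; lra | | lra | easy].
    intros t Ht. unfold chebyshev_integrand. assert (Hwt := Hw t ltac:(lra)).
    assert (g t < g m) by (apply Hg; lra). assert (0 < (t - m) * (g m - g t)) by nra. nra. }
  assert (HmA : m * A0 = A1) by (unfold m; field; lra).
  rewrite <- HmA in Hh |- *. nra.
Qed.

End Chebyshev.

Lemma sum_inv_consecutive n :
  sum_f_R0 (fun k => / ((INR k + 1) * (INR k + 2))) n = 1 - / (INR n + 2).
Proof.
  induction n as [|n IH]; cbn [sum_f_R0].
  - simpl. field.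
  - rewrite IH, S_INR. assert (0 <= INR n) by apply pos_INR. field. lra.
Qed.

Lemma ex_series_inv_consecutive : ex_series (fun k => / ((INR k + 1) * (INR k + 2))).
Proof.
  exists 1. apply is_series_Reals. intros eps Heps.
  destruct (INR_unbounded (/ eps)) as [N HN].
  exists N. intros n Hn. unfold Rdist. rewrite sum_inv_consecutive.
  assert (HnN : INR N <= INR n) by (apply le_INR; lia).
  assert (Hn0 : 0 <= INR n) by apply pos_INR.
  replace (1 - / (INR n + 2) - 1) with (- / (INR n + 2)) by ring.
  rewrite Rabs_Ropp, Rabs_right by (left; apply Rinv_0_lt_compat; lra).
  rewrite <- (Rinv_inv eps). apply Rinv_lt_contravar; [|lra].
  apply Rmult_lt_0_compat; [apply Rinv_0_lt_compat|]; lra.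
Qed.

Lemma sum_f_R0_le_Series a n : (forall k, 0 <= a k) -> ex_series a -> sum_f_R0 a n <= Series a.
Proof.
  intros Hpos Hex. apply Series_correct, is_series_Reals in Hex.
  apply Rnot_lt_le. intros Hlt.
  destruct (Hex (sum_f_R0 a n - Series a) ltac:(lra)) as [N HN].
  specialize (HN (max N n) ltac:(lia)).
  assert (Hmono : forall p, sum_f_R0 a n <= sum_f_R0 a (n + p)).
  { induction p as [|p IH]; [rewrite Nat.add_0_r; lra|].
    rewrite Nat.add_succ_r. simpl. specialize (Hpos (S (n + p))). lra. }
  specialize (Hmono (max N n - n)%nat).
  replace (n + (max N n - n))%nat with (max N n) in Hmono by lia.
  unfold Rdist in HN. apply Rabs_def2 in HN. lra.
Qed.

Lemma sum_f_R0_near_Series a eps : ex_series a -> 0 < eps ->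
  exists N, Rabs (sum_f_R0 a N - Series a) < eps.
Proof.
  intros Hex Heps. apply Series_correct, is_series_Reals in Hex.
  destruct (Hex eps Heps) as [N HN]. exists N. apply HN. lia.
Qed.

Definition psi2_term (x : R) (m k : nat) : R := (1 + INR k) / (x + INR k) ^ m.

Definition psi2_abs (n : nat) (x : R) : R := INR (fact n) * Series (psi2_term x (S n)).

Lemma psi2_eq n x : psi2 n x = (-1) ^ (n + 1) * psi2_abs n x.
Proof. unfold psi2, psi2_abs, psi2_term. rewrite Nat.add_1_r. ring. Qed.

Lemma psi2_term_ge0 x m k : 0 < x -> 0 <= psi2_term x m k.
Proof.
  intros Hx. assert (0 <= INR k) by apply pos_INR.
  apply Rle_mult_inv_pos; [lra | apply pow_lt; lra].
Qed.

Lemma psi2_term_succ_le x m k : 0 < x -> psi2_term x m (S k) <= 2 * psi2_term 1 m k.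
Proof.
  intros Hx. unfold psi2_term. rewrite S_INR. assert (0 <= INR k) by apply pos_INR.
  assert (0 < (1 + INR k) ^ m) by (apply pow_lt; lra).
  assert ((1 + INR k) ^ m <= (x + (INR k + 1)) ^ m) by (apply pow_incr; lra).
  apply Rle_trans with ((1 + (INR k + 1)) / (1 + INR k) ^ m).
  - unfold Rdiv. apply Rmult_le_compat_l; [lra|]. apply Rinv_le_contravar; lra.
  - unfold Rdiv. rewrite <- Rmult_assoc. apply Rmult_le_compat_r; [|lra].
    left. apply Rinv_0_lt_compat. lra.
Qed.

Lemma ex_series_psi2_term x m : 0 < x -> (3 <= m)%nat -> ex_series (psi2_term x m).
Proof.
  intros Hx Hm.
  assert (Hex1 : ex_series (psi2_term 1 m)).
  { apply (ex_series_le (K := R_AbsRing) (V := R_CompleteNormedModule) _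
             (fun k => 2 * / ((INR k + 1) * (INR k + 2)))).
    - intros k. unfold norm; simpl. rewrite Rabs_right by (apply Rle_ge, psi2_term_ge0; lra).
      unfold psi2_term. assert (Hk : 0 <= INR k) by apply pos_INR.
      assert (H3 : (1 + INR k) ^ 3 <= (1 + INR k) ^ m) by (apply Rle_pow; [lra | exact Hm]).
      assert (0 < (1 + INR k) ^ 3) by (apply pow_lt; lra).
      apply Rle_trans with ((1 + INR k) / (1 + INR k) ^ 3).
      + unfold Rdiv. apply Rmult_le_compat_l; [lra|]. apply Rinv_le_contravar; lra.
      + apply (Rmult_le_reg_r ((1 + INR k) ^ 3 * ((INR k + 1) * (INR k + 2)))); [nra|].
        replace ((1 + INR k) / (1 + INR k) ^ 3 * ((1 + INR k) ^ 3 * ((INR k + 1) * (INR k + 2))))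
          with ((1 + INR k) * ((INR k + 1) * (INR k + 2))) by (field; lra).
        replace (2 * / ((INR k + 1) * (INR k + 2)) * ((1 + INR k) ^ 3 * ((INR k + 1) * (INR k + 2))))
          with (2 * (1 + INR k) ^ 3) by (field; lra).
        simpl. nra.
    - apply (ex_series_scal_l (K := R_AbsRing) (V := R_NormedModule)).
      apply ex_series_inv_consecutive. }
  apply (ex_series_incr_1 (psi2_term x m)).
  apply (ex_series_le (K := R_AbsRing) (V := R_CompleteNormedModule) _
           (fun k => 2 * psi2_term 1 m k)).
  - intros k. unfold norm; simpl.
    rewrite Rabs_right by (apply Rle_ge, psi2_term_ge0; lra). apply psi2_term_succ_le, Hx.
  - apply (ex_series_scal_l (K := R_AbsRing) (V := R_NormedModule)). exact Hex1.
Qed.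

Lemma Series_psi2_term_bounds x m : 0 < x -> (3 <= m)%nat ->
  / x ^ m <= Series (psi2_term x m) <= / x ^ m + 2 * Series (psi2_term 1 m).
Proof.
  intros Hx Hm.
  assert (Hex := ex_series_psi2_term x m Hx Hm).
  assert (Hex1 := ex_series_psi2_term 1 m ltac:(lra) Hm).
  rewrite (Series_incr_1 _ Hex).
  replace (psi2_term x m 0) with (/ x ^ m)
    by (unfold psi2_term; simpl INR; rewrite !Rplus_0_r; field; apply pow_nonzero; lra).
  assert (Hb : forall k, 0 <= psi2_term x m (S k) <= 2 * psi2_term 1 m k)
    by (intros k; split; [apply psi2_term_ge0 | apply psi2_term_succ_le]; lra).
  split.
  - assert (0 <= Series (fun k => psi2_term x m (S k))); [|lra].
    apply Rle_trans with (sum_f_R0 (fun k => psi2_term x m (S k)) 0).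
    + apply Hb.
    + apply sum_f_R0_le_Series; [apply Hb | apply (ex_series_incr_1 (psi2_term x m)), Hex].
  - rewrite <- Series_scal_l. apply Rplus_le_compat_l, Series_le; [apply Hb|].
    apply (ex_series_scal_l (K := R_AbsRing) (V := R_NormedModule)). exact Hex1.
Qed.

Definition psi2_kernel (x : R) (M : nat) (t : R) : R :=
  t ^ M * exp (- (x * t)) / (1 - exp (- t)) ^ 2.

(* Truncation of the expansion [1 / (1 - q) ^ 2 = sum_k (1 + k) q ^ k] at
   [q = exp (- t)]; its termwise integrals are the terms of [psi2_abs]. *)
Definition psi2_kernel_partial (x : R) (M K : nat) (t : R) : R :=
  sum_f_R0 (fun k => (1 + INR k) * gamma_kernel (x + INR k) M t) K.

Lemma psi2_kernel_S x M t : psi2_kernel x (S M) t = t * psi2_kernel x M t.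
Proof. unfold psi2_kernel, Rdiv. simpl. ring. Qed.

Lemma exp_neg_bounds t : 0 < t -> 0 < exp (- t) < 1.
Proof. intros Ht. split; [apply exp_pos|]. rewrite <- exp_0. apply exp_increasing. lra. Qed.

Lemma exp_neg_pow a n : exp (- a) ^ n = exp (- (a * INR n)).
Proof.
  induction n as [|n IH].
  - simpl. rewrite Rmult_0_r, Ropp_0, exp_0. easy.
  - rewrite S_INR. simpl pow. rewrite IH, <- exp_plus. f_equal. ring.
Qed.

Lemma exp_neg_pow_succ_le a K : 0 < a ->
  (INR K + 2) * exp (- a) ^ S K <= 4 / (a ^ 2 * (INR K + 1)).
Proof.
  intros Ha. assert (HK := pos_INR K).
  assert (Hb := pow_mul_exp_le a 1 (INR K + 1) Ha ltac:(lra)).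
  rewrite pow_1 in Hb. rewrite exp_neg_pow, S_INR.
  assert (0 < exp (- (a * (INR K + 1)))) by apply exp_pos.
  replace (4 / (a ^ 2 * (INR K + 1))) with (2 * (INR (fact 2) / (a ^ 2 * (INR K + 1))))
    by (simpl; field; lra).
  nra.
Qed.

Lemma sum_weighted_geom q K :
  (1 - q) ^ 2 * sum_f_R0 (fun k => (1 + INR k) * q ^ k) K
  = 1 - (INR K + 2) * q ^ S K + (INR K + 1) * q ^ S (S K).
Proof.
  induction K as [|K IH]; cbn [sum_f_R0].
  - simpl. ring.
  - rewrite Rmult_plus_distr_l, IH, S_INR. simpl. ring.
Qed.

Lemma psi2_kernel_sub_partial x M K t : 0 < t ->
  psi2_kernel x M t - psi2_kernel_partial x M K t =
  t ^ M * exp (- (x * t)) * exp (- t) ^ S K * ((INR K + 2) - (INR K + 1) * exp (- t))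
  / (1 - exp (- t)) ^ 2.
Proof.
  intros Ht. destruct (exp_neg_bounds t Ht) as [Hq0 Hq1].
  assert (Hpartial : psi2_kernel_partial x M K t
    = t ^ M * exp (- (x * t)) * sum_f_R0 (fun k => (1 + INR k) * exp (- t) ^ k) K).
  { assert (Hshift : forall k, exp (- ((x + INR k) * t)) = exp (- (x * t)) * exp (- t) ^ k).
    { intros k. induction k as [|k IH]; [simpl; rewrite Rplus_0_r; ring|].
      rewrite S_INR. replace (- ((x + (INR k + 1)) * t)) with (- ((x + INR k) * t) + - t) by ring.
      rewrite exp_plus, IH. simpl. ring. }
    unfold psi2_kernel_partial, gamma_kernel.
    induction K as [|K IH]; cbn [sum_f_R0]; [|rewrite IH]; rewrite Hshift; ring. }
  assert (Hgeom := sum_weighted_geom (exp (- t)) K).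
  rewrite Hpartial. unfold psi2_kernel. set (q := exp (- t)) in *.
  replace (sum_f_R0 (fun k => (1 + INR k) * q ^ k) K)
    with ((1 - (INR K + 2) * q ^ S K + (INR K + 1) * q ^ S (S K)) / (1 - q) ^ 2)
    by (rewrite <- Hgeom; field; lra).
  simpl. field. lra.
Qed.

Lemma psi2_kernel_partial_le x M K t : 0 < x -> 0 < t ->
  psi2_kernel_partial x M K t <= psi2_kernel x M t.
Proof.
  intros Hx Ht. assert (0 <= psi2_kernel x M t - psi2_kernel_partial x M K t); [|lra].
  rewrite psi2_kernel_sub_partial by easy.
  destruct (exp_neg_bounds t Ht) as [Hq0 Hq1].
  assert (0 <= INR K) by apply pos_INR.
  assert (0 <= t ^ M) by (apply pow_le; lra).
  assert (0 < exp (- (x * t))) by apply exp_pos.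
  assert (0 < exp (- t) ^ S K) by (apply pow_lt; lra).
  apply Rle_mult_inv_pos; [|apply pow_lt; lra].
  apply Rmult_le_pos; [|nra]. apply Rmult_le_pos; [|lra]. apply Rmult_le_pos; lra.
Qed.

Lemma psi2_kernel_sub_partial_le x M K a b t : 0 < x -> 0 < a -> a <= t <= b ->
  psi2_kernel x M t - psi2_kernel_partial x M K t
  <= b ^ M * 4 / (a ^ 2 * (1 - exp (- a)) ^ 2) / (INR K + 1).
Proof.
  intros Hx Ha Ht. rewrite psi2_kernel_sub_partial by lra.
  assert (HK : 0 <= INR K) by apply pos_INR.
  destruct (exp_neg_bounds a Ha) as [Hqa0 Hqa1].
  destruct (exp_neg_bounds t ltac:(lra)) as [Hqt0 Hqt1].
  assert (Hqat : exp (- t) <= exp (- a)) by (apply exp_le_exp; lra).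
  assert (HtM : t ^ M <= b ^ M) by (apply pow_incr; lra).
  assert (0 <= t ^ M) by (apply pow_le; lra).
  assert (Hxt : 0 < exp (- (x * t)) <= 1)
    by (split; [apply exp_pos | rewrite <- exp_0; apply exp_le_exp; nra]).
  assert (Hqk : 0 < exp (- t) ^ S K <= exp (- a) ^ S K)
    by (split; [apply pow_lt | apply pow_incr]; lra).
  assert (Hdecay := exp_neg_pow_succ_le a K Ha).
  assert (Hfactor : 0 <= exp (- (x * t)) * (INR K + 2 - (INR K + 1) * exp (- t)) <= INR K + 2).
  { assert (0 <= INR K + 2 - (INR K + 1) * exp (- t) <= INR K + 2) by nra. split; nra. }
  replace (b ^ M * 4 / (a ^ 2 * (1 - exp (- a)) ^ 2) / (INR K + 1))
    with (b ^ M * (4 / (a ^ 2 * (INR K + 1))) / (1 - exp (- a)) ^ 2)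
    by (field; repeat split; try apply pow_nonzero; lra).
  assert (Hnum : 0 <= t ^ M * exp (- (x * t)) * exp (- t) ^ S K
                       * (INR K + 2 - (INR K + 1) * exp (- t))
                  <= b ^ M * (4 / (a ^ 2 * (INR K + 1)))).
  { replace (t ^ M * exp (- (x * t)) * exp (- t) ^ S K * (INR K + 2 - (INR K + 1) * exp (- t)))
      with (t ^ M * exp (- t) ^ S K * (exp (- (x * t)) * (INR K + 2 - (INR K + 1) * exp (- t))))
      by ring.
    assert (0 <= t ^ M * exp (- t) ^ S K <= b ^ M * exp (- a) ^ S K)
      by (split; [|apply Rmult_le_compat]; nra).
    split; [nra|]. apply Rle_trans with (b ^ M * ((INR K + 2) * exp (- a) ^ S K)); [nra|].
    apply Rmult_le_compat_l; [nra | easy]. }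
  unfold Rdiv at 1. apply Rmult_le_compat; [easy | left; apply Rinv_0_lt_compat, pow_lt; lra
                                           | easy |].
  apply Rinv_le_contravar; [apply pow_lt; lra | apply pow_incr; lra].
Qed.

Lemma continuous_psi2_kernel x M t : 0 < t -> continuous (psi2_kernel x M) t.
Proof.
  intros Ht. apply (ex_derive_continuous (K := R_AbsRing) (V := R_NormedModule)).
  unfold psi2_kernel. destruct (exp_neg_bounds t Ht).
  auto_derive. apply Rgt_not_eq. nra.
Qed.

Lemma ex_RInt_psi2_kernel x M a b : 0 < a <= b -> ex_RInt (psi2_kernel x M) a b.
Proof.
  intros Hab. apply (ex_RInt_continuous (V := R_CompleteNormedModule)). intros t Ht.
  rewrite Rmin_left, Rmax_right in Ht by lra. apply continuous_psi2_kernel. lra.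
Qed.

Lemma is_RInt_psi2_kernel_partial x M K a b : 0 < x ->
  is_RInt (psi2_kernel_partial x M K) a b
    (sum_f_R0 (fun k => (1 + INR k) * (gamma_tail (x + INR k) M a - gamma_tail (x + INR k) M b)) K).
Proof.
  intros Hx. unfold psi2_kernel_partial.
  induction K as [|K IH]; cbn [sum_f_R0].
  - apply (is_RInt_scal (gamma_kernel (x + INR 0) M)), is_RInt_gamma_kernel.
    simpl. lra.
  - apply (is_RInt_plus (fun t => sum_f_R0 (fun k => (1 + INR k) * gamma_kernel (x + INR k) M t) K)
                        (fun t => (1 + INR (S K)) * gamma_kernel (x + INR (S K)) M t)); [exact IH|].
    apply (is_RInt_scal (gamma_kernel (x + INR (S K)) M)), is_RInt_gamma_kernel.
    assert (0 <= INR (S K)) by apply pos_INR. lra.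
Qed.

Lemma psi2_term_gamma_tail x M k : 0 < x ->
  (1 + INR k) * gamma_tail (x + INR k) M 0 = INR (fact M) * psi2_term x (S M) k.
Proof.
  intros Hx. assert (0 <= INR k) by apply pos_INR. unfold psi2_term.
  rewrite gamma_tail_0 by lra. field. apply pow_nonzero. lra.
Qed.

Lemma Rle_of_le_add_div_succ a b c : (forall K : nat, a <= b + c / (INR K + 1)) -> a <= b.
Proof.
  intros H. apply Rnot_lt_le. intros Hba.
  destruct (INR_unbounded (Rabs c / (a - b))) as [K HK].
  specialize (H K). assert (0 <= INR K) by apply pos_INR.
  assert (Hc : c / (INR K + 1) < a - b); [|lra].
  apply (Rmult_lt_reg_r (INR K + 1)); [lra|].
  replace (c / (INR K + 1) * (INR K + 1)) with c by (field; lra).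
  apply Rle_lt_trans with (Rabs c); [apply Rle_abs|].
  apply (Rmult_lt_compat_r (a - b)) in HK; [|lra].
  replace (Rabs c / (a - b) * (a - b)) with (Rabs c) in HK by (field; lra). nra.
Qed.

Lemma sum_f_R0_le_const f c K : (forall k, (k <= K)%nat -> f k <= c) ->
  sum_f_R0 f K <= c * (INR K + 1).
Proof.
  intros H. induction K as [|K IH]; cbn [sum_f_R0].
  - specialize (H 0%nat (le_n 0)). simpl. lra.
  - rewrite S_INR. assert (sum_f_R0 f K <= c * (INR K + 1)) by (apply IH; intros; apply H; lia).
    specialize (H (S K) (le_n _)). lra.
Qed.

Section Psi2Kernel.

Variables (x : R) (M : nat).
Hypotheses (Hx : 0 < x) (HM : (2 <= M)%nat).

Let term_integral (k : nat) : R := (1 + INR k) * gamma_tail (x + INR k) M 0.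

Lemma Series_term_integral : ex_series term_integral /\ Series term_integral = psi2_abs M x.
Proof.
  assert (Hex := ex_series_psi2_term x (S M) Hx ltac:(lia)).
  assert (Hext : forall k, term_integral k = scal (INR (fact M)) (psi2_term x (S M) k))
    by (intros k; apply psi2_term_gamma_tail, Hx).
  split.
  - apply (ex_series_ext _ _ (fun k => eq_sym (Hext k))).
    apply (ex_series_scal_l (K := R_AbsRing) (V := R_NormedModule)), Hex.
  - unfold psi2_abs. rewrite <- Series_scal_l. apply Series_ext, Hext.
Qed.

Lemma term_integral_ge0 k : 0 <= term_integral k.
Proof.
  unfold term_integral. assert (0 <= INR k) by apply pos_INR.
  apply Rmult_le_pos; [lra | apply gamma_tail_ge0; lra].
Qed.

Lemma RInt_psi2_kernel_le_partial a b K : 0 < a <= b ->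
  RInt (psi2_kernel x M) a b
  <= sum_f_R0 term_integral K + (b - a) * (b ^ M * 4 / (a ^ 2 * (1 - exp (- a)) ^ 2)) / (INR K + 1).
Proof.
  intros Hab.
  assert (HP := is_RInt_psi2_kernel_partial x M K a b Hx).
  assert (ExP : ex_RInt (psi2_kernel_partial x M K) a b) by (eexists; eauto).
  assert (ExW := ex_RInt_psi2_kernel x M a b Hab).
  assert (Hminus : RInt (fun t => psi2_kernel x M t - psi2_kernel_partial x M K t) a b
                   = RInt (psi2_kernel x M) a b - RInt (psi2_kernel_partial x M K) a b)
    by (apply (RInt_minus (V := R_CompleteNormedModule)); easy).
  set (C := b ^ M * 4 / (a ^ 2 * (1 - exp (- a)) ^ 2)).
  assert (Htail : RInt (fun t => psi2_kernel x M t - psi2_kernel_partial x M K t) a b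
                  <= (b - a) * C / (INR K + 1)).
  { replace ((b - a) * C / (INR K + 1)) with (RInt (fun _ => C / (INR K + 1)) a b)
      by (rewrite RInt_const; unfold scal; simpl; unfold mult; simpl; field;
          assert (H := pos_INR K); lra).
    apply RInt_le; [lra | apply (ex_RInt_minus (V := R_CompleteNormedModule)); easy
                   | apply ex_RInt_const |].
    intros t Ht. apply psi2_kernel_sub_partial_le; lra. }
  assert (Hpartial : RInt (psi2_kernel_partial x M K) a b <= sum_f_R0 term_integral K).
  { rewrite (is_RInt_unique _ _ _ _ HP). apply sum_Rle. intros k _. unfold term_integral.
    assert (0 <= INR k) by apply pos_INR.
    assert (gamma_tail (x + INR k) M a <= gamma_tail (x + INR k) M 0) by (apply gamma_tail_decr; lra).
    assert (0 <= gamma_tail (x + INR k) M b) by (apply gamma_tail_ge0; lra).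
    apply Rmult_le_compat_l; lra. }
  lra.
Qed.

Lemma RInt_psi2_kernel_le a b : 0 < a <= b -> RInt (psi2_kernel x M) a b <= psi2_abs M x.
Proof.
  intros Hab. destruct Series_term_integral as [Hex HS]. rewrite <- HS.
  apply (Rle_of_le_add_div_succ _ _ ((b - a) * (b ^ M * 4 / (a ^ 2 * (1 - exp (- a)) ^ 2)))).
  intros K. eapply Rle_trans; [apply (RInt_psi2_kernel_le_partial a b K Hab)|].
  assert (Hseries := sum_f_R0_le_Series term_integral K term_integral_ge0 Hex). lra.
Qed.

Lemma RInt_psi2_kernel_ge eps : 0 < eps ->
  exists d B, 0 < d /\ d < B /\ forall a b, 0 < a <= d -> B <= b ->
    psi2_abs M x - eps < RInt (psi2_kernel x M) a b.
Proof.
  intros Heps. destruct Series_term_integral as [Hex HS].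
  destruct (sum_f_R0_near_Series term_integral (eps / 3) Hex ltac:(lra)) as [K HK].
  rewrite HS in HK. apply Rabs_def2 in HK.
  assert (HK0 : 0 <= INR K) by apply pos_INR.
  set (delta := eps / (3 * (INR K + 1) ^ 2)).
  assert (Hdelta : 0 < delta) by (apply Rdiv_lt_0_compat; [|apply Rmult_lt_0_compat, pow_lt]; lra).
  destruct (gamma_tail_vanishes x M delta Hx Hdelta) as [B0 HB0].
  assert (Hd1 := Rmin_l 1 delta). assert (Hd2 := Rmin_r 1 delta).
  assert (HB1 := Rmax_l B0 2). assert (HB2 := Rmax_r B0 2).
  exists (Rmin 1 delta), (Rmax B0 2). split; [apply Rmin_pos; lra|]. split; [lra|].
  intros a b Ha Hb.
  assert (HP := is_RInt_psi2_kernel_partial x M K a b Hx).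
  assert (Hle : RInt (psi2_kernel_partial x M K) a b <= RInt (psi2_kernel x M) a b).
  { apply RInt_le; [lra | eexists; eauto | apply ex_RInt_psi2_kernel; lra |].
    intros t Ht. apply psi2_kernel_partial_le; lra. }
  rewrite (is_RInt_unique _ _ _ _ HP) in Hle.
  assert (Hloss : sum_f_R0 (fun k => term_integral k
      - (1 + INR k) * (gamma_tail (x + INR k) M a - gamma_tail (x + INR k) M b)) K
      <= 2 * delta * (INR K + 1) * (INR K + 1)).
  { apply sum_f_R0_le_const. intros k Hk. unfold term_integral.
    assert (0 <= INR k) by apply pos_INR.
    assert (INR k <= INR K) by (apply le_INR; easy).
    assert (gamma_tail (x + INR k) M 0 - gamma_tail (x + INR k) M a <= a)
      by (apply gamma_tail_near_0; lra).
    assert (gamma_tail (x + INR k) M a <= gamma_tail (x + INR k) M 0) by (apply gamma_tail_decr; lra).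
    assert (gamma_tail (x + INR k) M b <= gamma_tail x M b) by (apply gamma_tail_le_param; lra).
    assert (0 <= gamma_tail (x + INR k) M b) by (apply gamma_tail_ge0; lra).
    specialize (HB0 b ltac:(lra)).
    replace ((1 + INR k) * gamma_tail (x + INR k) M 0
             - (1 + INR k) * (gamma_tail (x + INR k) M a - gamma_tail (x + INR k) M b))
      with ((1 + INR k) * ((gamma_tail (x + INR k) M 0 - gamma_tail (x + INR k) M a)
                           + gamma_tail (x + INR k) M b)) by ring.
    rewrite (Rmult_comm (2 * delta)). apply Rmult_le_compat; lra. }
  rewrite minus_sum in Hloss.
  replace (2 * delta * (INR K + 1) * (INR K + 1)) with (2 * eps / 3) in Hloss
    by (unfold delta; field; lra).
  lra.
Qed.

End Psi2Kernel.

Lemma is_RInt_0_infty_psi2_kernel x M : 0 < x -> (2 <= M)%nat ->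
  is_RInt_0_infty (psi2_kernel x M) (psi2_abs M x).
Proof.
  intros Hx HM eps Heps.
  destruct (RInt_psi2_kernel_ge x M Hx HM eps Heps) as (d & B & Hd & HdB & Hge).
  exists d, B. split; [easy|]. split; [easy|]. intros a b Ha Hb.
  split; [apply ex_RInt_psi2_kernel; lra|].
  assert (Hle := RInt_psi2_kernel_le x M Hx HM a b ltac:(lra)).
  specialize (Hge a b Ha Hb). apply Rabs_def1; lra.
Qed.

Lemma expm1_pos t : 0 < t -> 0 < exp t - 1.
Proof. intros Ht. assert (1 + t <= exp t) by apply exp_ineq1_le. lra. Qed.

Lemma exp_sub_exp_neg_gt s : 0 < s -> 2 * s < exp s - exp (- s).
Proof.
  intros Hs.
  assert (Htaylor := exp_ge_taylor s 3 ltac:(lra)). simpl in Htaylor.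
  set (A := 1 + s + s * s / 2 + s * s * s / 6).
  set (B := 1 - s + s * s / 2).
  assert (HA : A <= exp s) by (unfold A; lra).
  assert (HB : 0 < B) by (unfold B; nra).
  assert (HAB : 1 <= A * B).
  { replace (A * B) with (1 + s ^ 3 / 6 + s ^ 4 / 12 + s ^ 5 / 12) by (unfold A, B; field).
    assert (0 < s ^ 3) by (apply pow_lt; lra). assert (0 < s ^ 4) by (apply pow_lt; lra).
    assert (0 < s ^ 5) by (apply pow_lt; lra). lra. }
  assert (Hes : 0 < exp s) by apply exp_pos.
  assert (Hinv : exp (- s) <= B).
  { rewrite exp_Ropp. apply (Rmult_le_reg_l (exp s)); [easy|]. rewrite Rinv_r by lra.
    apply Rle_trans with (A * B); [easy | apply Rmult_le_compat_r; lra]. }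
  unfold A, B in *. assert (0 < s * s * s) by (apply Rmult_lt_0_compat; nra). lra.
Qed.

Definition phi (t : R) : R := 2 / t - 2 / (exp t - 1).

Lemma phi_derive_neg t : 0 < t -> 2 * exp t / (exp t - 1) ^ 2 < 2 / t ^ 2.
Proof.
  intros Ht.
  set (u := exp (t / 2)).
  assert (Hu : exp t = u * u) by (unfold u; rewrite <- exp_plus; f_equal; field).
  assert (Hu0 : 0 < u) by apply exp_pos.
  assert (He1 := expm1_pos t Ht).
  assert (Hsinh := exp_sub_exp_neg_gt (t / 2) ltac:(lra)).
  rewrite exp_Ropp in Hsinh. fold u in Hsinh.
  assert (Hk : t * u < u * u - 1).
  { apply (Rmult_lt_compat_r u) in Hsinh; [|easy].
    replace ((u - / u) * u) with (u * u - 1) in Hsinh by (field; lra). lra. }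
  rewrite Hu in *.
  assert (0 < t * u) by nra.
  assert (Hsq : (t * u) ^ 2 < (u * u - 1) ^ 2) by nra.
  apply (Rmult_lt_reg_r ((u * u - 1) ^ 2 * t ^ 2)); [apply Rmult_lt_0_compat; apply pow_lt; lra|].
  replace (2 * (u * u) / (u * u - 1) ^ 2 * ((u * u - 1) ^ 2 * t ^ 2)) with (2 * (t * u) ^ 2)
    by (field; lra).
  replace (2 / t ^ 2 * ((u * u - 1) ^ 2 * t ^ 2)) with (2 * (u * u - 1) ^ 2) by (field; lra).
  lra.
Qed.

Lemma phi_decr s t : 0 < s -> s < t -> phi t < phi s.
Proof.
  intros Hs Hst.
  assert (- phi s < - phi t); [|lra].
  apply (incr_function (fun t => - phi t) (Finite 0) p_infty
           (fun t => 2 / t ^ 2 - 2 * exp t / (exp t - 1) ^ 2)); try easy.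
  - intros z Hz _. simpl in Hz. unfold phi. assert (He1 := expm1_pos z Hz).
    auto_derive; [repeat split; lra|]. field_R. repeat split; lra.
  - intros z Hz _. simpl in Hz. assert (H := phi_derive_neg z Hz). lra.
Qed.

Lemma continuous_phi t : 0 < t -> continuous phi t.
Proof.
  intros Ht. apply (ex_derive_continuous (K := R_AbsRing) (V := R_NormedModule)).
  unfold phi. assert (He1 := expm1_pos t Ht). auto_derive. repeat split; lra.
Qed.

Definition ell (x t : R) : R := x + 2 / (exp t - 1).

Lemma ell_decr x s t : 0 < s -> s < t -> ell x t < ell x s.
Proof.
  intros Hs Hst. unfold ell.
  assert (H1 := expm1_pos s Hs).
  assert (exp s < exp t) by (apply exp_increasing; lra).
  assert (2 / (exp t - 1) < 2 / (exp s - 1)); [|lra].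
  unfold Rdiv. apply Rmult_lt_compat_l; [lra|]. apply Rinv_lt_contravar; [nra | lra].
Qed.

Lemma continuous_ell x t : 0 < t -> continuous (ell x) t.
Proof.
  intros Ht. apply (ex_derive_continuous (K := R_AbsRing) (V := R_NormedModule)).
  unfold ell. assert (He1 := expm1_pos t Ht). auto_derive. lra.
Qed.

Lemma ell_phi x t : ell x t = x + 2 / t - phi t.
Proof. unfold ell, phi. ring. Qed.

Lemma psi2_kernel_pos x M t : 0 < t -> 0 < psi2_kernel x M t.
Proof.
  intros Ht. unfold psi2_kernel. destruct (exp_neg_bounds t Ht).
  apply Rdiv_lt_0_compat; [apply Rmult_lt_0_compat; [apply pow_lt; lra | apply exp_pos]|].
  apply pow_lt. lra.
Qed.

Lemma is_derive_psi2_kernel x m t : 0 < t ->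
  is_derive (psi2_kernel x (S m)) t
    ((INR m - 1) * psi2_kernel x m t - x * psi2_kernel x (S m) t + phi t * psi2_kernel x (S m) t).
Proof.
  intros Ht. unfold psi2_kernel, phi.
  assert (He1 := expm1_pos t Ht). destruct (exp_neg_bounds t Ht) as [Hq0 Hq1].
  auto_derive; [apply Rgt_not_eq; nra|].
  change (match m with 0%nat => 1 | S _ => INR m + 1 end) with (INR (S m)). rewrite S_INR.
  replace (exp t) with (/ exp (- t)) by (rewrite exp_Ropp, Rinv_inv; reflexivity).
  assert (1 < / exp (- t)) by (rewrite <- Rinv_1; apply Rinv_lt_contravar; lra).
  simpl pow. field_R. repeat split; lra.
Qed.

Lemma psi2_kernel_le_near_0 x M a : 0 < x -> (3 <= M)%nat -> 0 < a <= 1 ->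
  psi2_kernel x M a <= 9 * a.
Proof.
  intros Hx HM Ha. unfold psi2_kernel.
  destruct (exp_neg_bounds a ltac:(lra)) as [Hq0 Hq1].
  assert (Hxa : exp (- (x * a)) <= 1) by (rewrite <- exp_0; apply exp_le_exp; nra).
  assert (Hea : exp a <= 3) by (apply Rle_trans with (exp 1); [apply exp_le_exp; lra | apply exp_le_3]).
  assert (Hinv : exp (- a) * exp a = 1) by (rewrite <- exp_plus, Rplus_opp_l; apply exp_0).
  assert (H1 : a * exp (- a) <= 1 - exp (- a)) by (assert (H := exp_ineq1_le a); nra).
  destruct M as [|[|[|M]]]; [lia|lia|lia|].
  assert (Hd : (a * exp (- a)) ^ 2 <= (1 - exp (- a)) ^ 2) by (apply pow_incr; nra).
  assert (Hpa : 0 < (a * exp (- a)) ^ 2) by (apply pow_lt; nra).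
  assert (HaM : a ^ M <= 1) by (rewrite <- (pow1 M); apply pow_incr; lra).
  assert (HaM0 : 0 <= a ^ M) by (apply pow_le; lra).
  apply Rle_trans with (a ^ S (S (S M)) * exp (- (x * a)) / (a * exp (- a)) ^ 2).
  - unfold Rdiv. apply Rmult_le_compat_l.
    + apply Rmult_le_pos; [apply pow_le; lra | apply Rlt_le, exp_pos].
    + apply Rinv_le_contravar; easy.
  - replace (a ^ S (S (S M)) * exp (- (x * a)) / (a * exp (- a)) ^ 2)
      with (a * a ^ M * exp (- (x * a)) * (exp a * exp a))
      by (rewrite <- (Rinv_inv (exp a)), <- exp_Ropp; simpl; field; split; lra).
    assert (0 < exp a) by apply exp_pos.
    assert (0 < exp (- (x * a))) by apply exp_pos.
    assert (exp a * exp a <= 9) by nra.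
    assert (0 <= a * a ^ M <= a) by (split; nra).
    assert (0 <= a * a ^ M * exp (- (x * a)) <= a) by (split; nra).
    nra.
Qed.

Lemma psi2_kernel_vanishes_at_0 x M eps : 0 < x -> (3 <= M)%nat -> 0 < eps ->
  exists d, 0 < d /\ forall a, 0 < a <= d -> Rabs (psi2_kernel x M a - 0) < eps.
Proof.
  intros Hx HM Heps. exists (Rmin 1 (eps / 18)). split; [apply Rmin_pos; lra|].
  intros a Ha. assert (Ha1 := Rmin_l 1 (eps / 18)). assert (Ha2 := Rmin_r 1 (eps / 18)).
  assert (H1 := psi2_kernel_le_near_0 x M a Hx HM ltac:(lra)).
  assert (H2 := psi2_kernel_pos x M a ltac:(lra)).
  rewrite Rminus_0_r, Rabs_right by lra. lra.
Qed.

Lemma psi2_kernel_vanishes_at_infty x M eps : 0 < x -> 0 < eps ->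
  exists B, forall b, B <= b -> Rabs (psi2_kernel x M b - 0) < eps.
Proof.
  intros Hx Heps.
  set (C := 4 * INR (fact (S M)) / x ^ S M).
  assert (HC : 0 < C)
    by (apply Rdiv_lt_0_compat; [assert (H := INR_fact_lt_0 (S M)); lra | apply pow_lt; lra]).
  exists (Rmax 1 (2 * C / eps)). intros b Hb.
  assert (Hb1 := Rmax_l 1 (2 * C / eps)). assert (Hb2 := Rmax_r 1 (2 * C / eps)).
  assert (H2 := psi2_kernel_pos x M b ltac:(lra)).
  rewrite Rminus_0_r, Rabs_right by lra.
  assert (Hq : exp (- b) <= / 2)
    by (rewrite exp_Ropp; apply Rinv_le_contravar; [lra | assert (H := exp_ineq1_le b); lra]).
  assert (Hq0 : 0 < exp (- b)) by apply exp_pos.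
  assert (Hd : / 4 <= (1 - exp (- b)) ^ 2) by (simpl; nra).
  assert (Hp := pow_mul_exp_le x M b Hx ltac:(lra)).
  assert (0 <= b ^ M * exp (- (x * b))) by (apply Rmult_le_pos; [apply pow_le | apply Rlt_le, exp_pos]; lra).
  apply Rle_lt_trans with (4 * (b ^ M * exp (- (x * b)))).
  - unfold psi2_kernel, Rdiv. rewrite Rmult_comm. apply Rmult_le_compat_r; [easy|].
    rewrite <- (Rinv_inv 4). apply Rinv_le_contravar; lra.
  - apply Rle_lt_trans with (C / b).
    + replace (C / b) with (4 * (INR (fact (S M)) / (x ^ S M * b)))
        by (unfold C; field; split; [apply pow_nonzero |]; lra).
      lra.
    + apply (Rmult_lt_reg_r b); [lra|].
      replace (C / b * b) with C by (field; lra).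
      assert (2 * C <= eps * b); [|lra].
      apply (Rmult_le_reg_r (/ eps)); [apply Rinv_0_lt_compat; lra|].
      replace (eps * b * / eps) with b by (field; lra). unfold Rdiv in Hb2. lra.
Qed.

(* Integration by parts of [psi2_kernel x (S m)] on ]0, +oo[, whose boundary
   terms vanish for [m >= 2]. *)
Lemma is_RInt_0_infty_phi_psi2_kernel x m : 0 < x -> (2 <= m)%nat ->
  is_RInt_0_infty (fun t => phi t * psi2_kernel x (S m) t)
    (x * psi2_abs (S m) x - (INR m - 1) * psi2_abs m x).
Proof.
  intros Hx Hm.
  set (g := fun t => (INR m - 1) * psi2_kernel x m t - x * psi2_kernel x (S m) t
                     + phi t * psi2_kernel x (S m) t).
  assert (Hg : is_RInt_0_infty g (0 - 0)).
  { apply (is_RInt_0_infty_derive (psi2_kernel x (S m)) g).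
    - intros t Ht. apply is_derive_psi2_kernel, Ht.
    - intros t Ht. apply (ex_derive_continuous (K := R_AbsRing) (V := R_NormedModule)).
      unfold g, psi2_kernel, phi. assert (He1 := expm1_pos t Ht). destruct (exp_neg_bounds t Ht).
      auto_derive. repeat split; try lra; apply Rgt_not_eq; nra.
    - intros eps Heps. apply psi2_kernel_vanishes_at_0; [easy | lia | easy].
    - intros eps Heps. apply psi2_kernel_vanishes_at_infty; easy. }
  assert (I := is_RInt_0_infty_plus _ _ _ _
    (is_RInt_0_infty_plus _ _ _ _ Hg
      (is_RInt_0_infty_scal _ _ (- (INR m - 1)) (is_RInt_0_infty_psi2_kernel x m Hx Hm)))
    (is_RInt_0_infty_scal _ _ x (is_RInt_0_infty_psi2_kernel x (S m) Hx ltac:(lia)))).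
  replace (x * psi2_abs (S m) x - (INR m - 1) * psi2_abs m x)
    with (0 - 0 + - (INR m - 1) * psi2_abs m x + x * psi2_abs (S m) x) by ring.
  eapply is_RInt_0_infty_ext; [|exact I]. intros t Ht. unfold g. ring.
Qed.

Lemma psi2_abs_turan x m : 0 < x -> (2 <= m)%nat ->
  (INR m - 1) * psi2_abs m x * psi2_abs (S (S m)) x < INR m * psi2_abs (S m) x ^ 2 /\
  (INR m + 2) * psi2_abs (S m) x ^ 2 < (INR m + 1) * psi2_abs m x * psi2_abs (S (S m)) x.
Proof.
  intros Hx Hm.
  assert (I0 := is_RInt_0_infty_psi2_kernel x m Hx Hm).
  assert (I1 := is_RInt_0_infty_psi2_kernel x (S m) Hx ltac:(lia)).
  assert (I2 := is_RInt_0_infty_psi2_kernel x (S (S m)) Hx ltac:(lia)).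
  assert (Iphi1 := is_RInt_0_infty_phi_psi2_kernel x m Hx Hm).
  assert (Iphi2 := is_RInt_0_infty_phi_psi2_kernel x (S m) Hx ltac:(lia)).
  rewrite S_INR in Iphi2.
  set (J0 := psi2_abs m x) in *. set (J1 := psi2_abs (S m) x) in *.
  set (J2 := psi2_abs (S (S m)) x) in *.
  set (w := psi2_kernel x (S m)) in *.
  assert (Itphi : is_RInt_0_infty (fun t => t * (phi t * w t)) (x * J2 - (INR m + 1 - 1) * J1)).
  { eapply is_RInt_0_infty_ext; [|exact Iphi2]. intros t _. unfold w. rewrite psi2_kernel_S. ring. }
  assert (Itw : is_RInt_0_infty (fun t => t * w t) J2).
  { eapply is_RInt_0_infty_ext; [|exact I2]. intros t _. unfold w. apply psi2_kernel_S. }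
  assert (Hell : forall t, 0 < t -> ell x t * psi2_kernel x (S m) t
      = x * psi2_kernel x (S m) t + 2 * psi2_kernel x m t - phi t * psi2_kernel x (S m) t).
  { intros t Ht0. rewrite ell_phi, psi2_kernel_S. field. lra. }
  assert (Iell1 : is_RInt_0_infty (fun t => ell x t * w t) ((INR m + 1) * J0)).
  { assert (I := is_RInt_0_infty_plus _ _ _ _
      (is_RInt_0_infty_plus _ _ _ _ (is_RInt_0_infty_scal _ _ x I1) (is_RInt_0_infty_scal _ _ 2 I0))
      (is_RInt_0_infty_scal _ _ (-1) Iphi1)).
    replace ((INR m + 1) * J0) with (x * J1 + 2 * J0 + -1 * (x * J1 - (INR m - 1) * J0)) by ring.
    eapply is_RInt_0_infty_ext; [|exact I]. intros t Ht0. unfold w. rewrite Hell by easy. ring. }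
  assert (Iell2 : is_RInt_0_infty (fun t => t * (ell x t * w t)) ((INR m + 2) * J1)).
  { assert (I := is_RInt_0_infty_plus _ _ _ _
      (is_RInt_0_infty_plus _ _ _ _ (is_RInt_0_infty_scal _ _ x I2) (is_RInt_0_infty_scal _ _ 2 I1))
      (is_RInt_0_infty_scal _ _ (-1) Iphi2)).
    replace ((INR m + 2) * J1) with (x * J2 + 2 * J1 + -1 * (x * J2 - (INR m + 1 - 1) * J1)) by ring.
    eapply is_RInt_0_infty_ext; [|exact I]. intros t Ht0. unfold w.
    rewrite Hell by easy. rewrite !psi2_kernel_S. ring. }
  assert (Hw : forall t, 0 < t -> 0 < w t) by (intros; apply psi2_kernel_pos; easy).
  assert (Hwc : forall t, 0 < t -> continuous w t) by (intros; apply continuous_psi2_kernel; easy).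
  assert (Cphi := is_RInt_0_infty_chebyshev w phi Hw Hwc continuous_phi phi_decr _ _ _ _
                    I1 Itw Iphi1 Itphi).
  assert (Cell := is_RInt_0_infty_chebyshev w (ell x) Hw Hwc (continuous_ell x) (ell_decr x) _ _ _ _
                    I1 Itw Iell1 Iell2).
  split; nra.
Qed.

Lemma is_RInt_0_infty_gamma_kernel c M : 0 < c ->
  is_RInt_0_infty (gamma_kernel c M) (gamma_tail c M 0).
Proof.
  intros Hc. replace (gamma_tail c M 0) with (0 - - gamma_tail c M 0) by ring.
  apply (is_RInt_0_infty_derive (fun t => - gamma_tail c M t)).
  - intros t _. replace (gamma_kernel c M t) with (opp (- gamma_kernel c M t))
      by (unfold opp; simpl; ring).
    apply (is_derive_opp (gamma_tail c M)), is_derive_gamma_tail. lra.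
  - intros t _. apply continuous_gamma_kernel.
  - intros eps Heps. exists (Rmin 1 (eps / 2)). split; [apply Rmin_pos; lra|].
    intros a Ha. assert (Ha1 := Rmin_l 1 (eps / 2)). assert (Ha2 := Rmin_r 1 (eps / 2)).
    assert (H1 := gamma_tail_near_0 c M a Hc ltac:(lra)).
    assert (H2 := gamma_tail_decr c M 0 a Hc ltac:(lra)).
    rewrite Rabs_right by lra. lra.
  - intros eps Heps. destruct (gamma_tail_vanishes c M eps Hc Heps) as [B HB].
    exists (Rmax B 0). intros b Hb. assert (HB0 := Rmax_l B 0). assert (HB1 := Rmax_r B 0).
    assert (H1 := HB b ltac:(lra)). assert (H2 := gamma_tail_ge0 c M b Hc ltac:(lra)).
    rewrite Rabs_left1 by lra. lra.
Qed.

Lemma gamma_kernel_le_psi2_kernel x k t : 0 < t ->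
  gamma_kernel x k t <= psi2_kernel x (S (S k)) t.
Proof.
  intros Ht. rewrite !psi2_kernel_S. unfold gamma_kernel, psi2_kernel.
  destruct (exp_neg_bounds t Ht) as [Hq0 Hq1].
  assert (H := exp_ineq1_le (- t)).
  assert (0 < t ^ k * exp (- (x * t))) by (apply Rmult_lt_0_compat; [apply pow_lt | apply exp_pos]; lra).
  assert (0 < (1 - exp (- t)) ^ 2) by (apply pow_lt; lra).
  assert ((1 - exp (- t)) ^ 2 <= t ^ 2) by (apply pow_incr; lra).
  replace (t * (t * (t ^ k * exp (- (x * t)) / (1 - exp (- t)) ^ 2)))
    with (t ^ k * exp (- (x * t)) * t ^ 2 / (1 - exp (- t)) ^ 2) by (simpl; field; lra).
  apply (Rmult_le_reg_r ((1 - exp (- t)) ^ 2)); [easy|].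
  replace (t ^ k * exp (- (x * t)) * t ^ 2 / (1 - exp (- t)) ^ 2 * (1 - exp (- t)) ^ 2)
    with (t ^ k * exp (- (x * t)) * t ^ 2) by (field; lra).
  apply Rmult_le_compat_l; lra.
Qed.

Lemma psi2_kernel_le_gamma_kernel x k t : 0 < t ->
  psi2_kernel x (S (S k)) t
  <= gamma_kernel x k t + 2 * gamma_kernel x (S k) t + gamma_kernel x (S (S k)) t.
Proof.
  intros Ht. rewrite !psi2_kernel_S. unfold gamma_kernel, psi2_kernel.
  destruct (exp_neg_bounds t Ht) as [Hq0 Hq1].
  assert (H := exp_ineq1_le t).
  assert (Hq : (1 + t) * exp (- t) <= 1).
  { rewrite exp_Ropp. apply (Rmult_le_reg_r (exp t)); [apply exp_pos|].
    rewrite Rmult_assoc, Rinv_l by (apply Rgt_not_eq, exp_pos). lra. }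
  assert (Hr : t <= (1 + t) * (1 - exp (- t))) by nra.
  assert (t ^ 2 <= ((1 + t) * (1 - exp (- t))) ^ 2) by (apply pow_incr; lra).
  assert (0 < t ^ k * exp (- (x * t))) by (apply Rmult_lt_0_compat; [apply pow_lt | apply exp_pos]; lra).
  assert (0 < (1 - exp (- t)) ^ 2) by (apply pow_lt; lra).
  replace (t * (t * (t ^ k * exp (- (x * t)) / (1 - exp (- t)) ^ 2)))
    with (t ^ k * exp (- (x * t)) * t ^ 2 / (1 - exp (- t)) ^ 2) by (simpl; field; lra).
  replace (t ^ k * exp (- (x * t)) + 2 * (t ^ S k * exp (- (x * t))) + t ^ S (S k) * exp (- (x * t)))
    with (t ^ k * exp (- (x * t)) * ((1 + t) * (1 - exp (- t))) ^ 2 / (1 - exp (- t)) ^ 2)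
    by (simpl; field; lra).
  unfold Rdiv. apply Rmult_le_compat_r; [left; apply Rinv_0_lt_compat; easy|].
  apply Rmult_le_compat_l; lra.
Qed.

Lemma psi2_abs_large_x x k : 1 <= x ->
  INR (fact k) / x ^ S k <= psi2_abs (S (S k)) x
  <= INR (fact k) / x ^ S k * (1 + (INR k + 1) * (INR k + 4) / x).
Proof.
  intros Hx.
  assert (HJ := is_RInt_0_infty_psi2_kernel x (S (S k)) ltac:(lra) ltac:(lia)).
  assert (IG : forall M, is_RInt_0_infty (gamma_kernel x M) (INR (fact M) / x ^ S M))
    by (intros M; rewrite <- gamma_tail_0 by lra; apply is_RInt_0_infty_gamma_kernel; lra).
  split.
  - apply (is_RInt_0_infty_le (gamma_kernel x k) (psi2_kernel x (S (S k)))); [|apply IG | easy].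
    intros t Ht. apply gamma_kernel_le_psi2_kernel, Ht.
  - eapply Rle_trans.
    + apply (is_RInt_0_infty_le (psi2_kernel x (S (S k)))
               (fun t => gamma_kernel x k t + 2 * gamma_kernel x (S k) t + gamma_kernel x (S (S k)) t));
        [| easy | apply is_RInt_0_infty_plus; [apply is_RInt_0_infty_plus|];
                  [apply IG | apply is_RInt_0_infty_scal, IG | apply IG]].
      intros t Ht. apply psi2_kernel_le_gamma_kernel, Ht.
    + rewrite !fact_simpl, !mult_INR, !S_INR.
      assert (0 <= INR k) by apply pos_INR. assert (0 < INR (fact k)) by apply INR_fact_lt_0.
      assert (0 < x ^ k) by (apply pow_lt; lra).
      assert (Hx2 : (INR k + 1 + 1) * (INR k + 1) / x ^ 2 <= (INR k + 1 + 1) * (INR k + 1) / x).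
      { unfold Rdiv. apply Rmult_le_compat_l; [nra|]. apply Rinv_le_contravar; [lra|]. simpl. nra. }
      apply Rle_trans with (INR (fact k) / x ^ S k
                            * (1 + 2 * (INR k + 1) / x + (INR k + 1 + 1) * (INR k + 1) / x ^ 2)).
      * right. simpl. field. lra.
      * apply Rmult_le_compat_l; [apply Rlt_le, Rdiv_lt_0_compat; [|apply pow_lt]; lra|].
        replace ((INR k + 1) * (INR k + 4) / x)
          with (2 * (INR k + 1) / x + (INR k + 1 + 1) * (INR k + 1) / x) by (field; lra).
        lra.
Qed.

Lemma psi2_abs_small_x x M : 0 < x <= 1 -> (2 <= M)%nat ->
  INR (fact M) / x ^ S M <= psi2_abs M x
  <= INR (fact M) / x ^ S M * (1 + 2 * Series (psi2_term 1 (S M)) * x).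
Proof.
  intros Hx HM. unfold psi2_abs.
  destruct (Series_psi2_term_bounds x (S M) ltac:(lra) ltac:(lia)) as [Hlow Hup].
  assert (0 <= Series (psi2_term 1 (S M))) by (assert (H := Series_psi2_term_bounds 1 (S M) ltac:(lra) ltac:(lia)); rewrite pow1 in H; lra).
  assert (0 < INR (fact M)) by apply INR_fact_lt_0.
  assert (0 < x ^ M) by (apply pow_lt; lra).
  assert (x ^ M <= 1) by (rewrite <- (pow1 M); apply pow_incr; lra).
  split.
  - unfold Rdiv. apply Rmult_le_compat_l; lra.
  - apply Rle_trans with (INR (fact M) * (/ x ^ S M + 2 * Series (psi2_term 1 (S M)))).
    + apply Rmult_le_compat_l; lra.
    + replace (INR (fact M) / x ^ S M * (1 + 2 * Series (psi2_term 1 (S M)) * x))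
        with (INR (fact M) * (/ x ^ S M + 2 * Series (psi2_term 1 (S M)) / x ^ M))
        by (simpl; field; lra).
      apply Rmult_le_compat_l; [lra|]. apply Rplus_le_compat_l.
      apply (Rmult_le_reg_r (x ^ M)); [easy|].
      replace (2 * Series (psi2_term 1 (S M)) / x ^ M * x ^ M) with (2 * Series (psi2_term 1 (S M)))
        by (field; lra).
      nra.
Qed.

Lemma psi2_abs_pos n x : 0 < x -> (2 <= n)%nat -> 0 < psi2_abs n x.
Proof.
  intros Hx Hn. unfold psi2_abs.
  destruct (Series_psi2_term_bounds x (S n) Hx ltac:(lia)) as [Hlow _].
  assert (0 < / x ^ S n) by (apply Rinv_0_lt_compat, pow_lt; lra).
  apply Rmult_lt_0_compat; [apply INR_fact_lt_0 | lra].
Qed.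

Lemma psi2_ratio_eq m x : 0 < x -> (2 <= m)%nat ->
  psi2_ratio (S m) x = psi2_abs (S m) x ^ 2 / (psi2_abs m x * psi2_abs (S (S m)) x).
Proof.
  intros Hx Hm. unfold psi2_ratio. rewrite !psi2_eq.
  replace (S m - 1)%nat with m by lia. replace (S m + 1)%nat with (S (S m)) by lia.
  assert (psi2_abs m x <> 0) by (apply Rgt_not_eq, psi2_abs_pos; easy).
  assert (psi2_abs (S (S m)) x <> 0) by (apply Rgt_not_eq, psi2_abs_pos; [|lia]; easy).
  rewrite !Nat.add_1_r. simpl pow. field.
  repeat split; try easy; apply pow_nonzero; lra.
Qed.

Lemma Rdiv_lt_Rdiv a b c d : 0 < b -> 0 < d -> a * d < c * b -> a / b < c / d.
Proof.
  intros Hb Hd H. apply (Rmult_lt_reg_r (b * d)); [nra|].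
  replace (a / b * (b * d)) with (a * d) by (field; lra).
  replace (c / d * (b * d)) with (c * b) by (field; lra). lra.
Qed.

Lemma psi2_ratio_bounds m x : 0 < x -> (2 <= m)%nat ->
  (INR (S m) - 2) / (INR (S m) - 1) < psi2_ratio (S m) x /\
  psi2_ratio (S m) x < INR (S m) / (INR (S m) + 1).
Proof.
  intros Hx Hm. rewrite psi2_ratio_eq, S_INR by easy.
  destruct (psi2_abs_turan x m Hx Hm) as [Hlow Hup].
  assert (H0 := psi2_abs_pos m x Hx Hm).
  assert (H2 := psi2_abs_pos (S (S m)) x Hx ltac:(lia)).
  assert (Hm2 : 2 <= INR m) by (apply (le_INR 2); easy).
  split; apply Rdiv_lt_Rdiv; try nra; try lra.
Qed.

Lemma fact_pow_ratio x k : 0 < x ->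
  (INR (fact (S k)) / x ^ S (S k)) ^ 2
  / (INR (fact k) / x ^ S k * (INR (fact (S (S k))) / x ^ S (S (S k))))
  = (INR k + 1) / (INR k + 2).
Proof.
  intros Hx. rewrite !fact_simpl, !mult_INR, !S_INR.
  assert (0 < INR (fact k)) by apply INR_fact_lt_0. assert (0 <= INR k) by apply pos_INR.
  simpl. field. repeat split; try lra. apply pow_nonzero. lra.
Qed.

Lemma ratio_sq_bounds a0 a1 a2 J0 J1 J2 e : 0 < a0 -> 0 < a1 -> 0 < a2 -> 0 <= e ->
  a0 <= J0 <= a0 * (1 + e) -> a1 <= J1 <= a1 * (1 + e) -> a2 <= J2 <= a2 * (1 + e) ->
  a1 ^ 2 / (a0 * a2) / (1 + e) ^ 2 <= J1 ^ 2 / (J0 * J2) <= a1 ^ 2 / (a0 * a2) * (1 + e) ^ 2.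
Proof.
  intros H0 H1 H2 He B0 B1 B2.
  assert (0 < J0 * J2) by nra.
  assert (Hden : a0 * a2 <= J0 * J2 <= a0 * a2 * (1 + e) ^ 2) by (simpl; split; nra).
  assert (Hnum : a1 ^ 2 <= J1 ^ 2 <= a1 ^ 2 * (1 + e) ^ 2)
    by (rewrite <- Rpow_mult_distr; split; apply pow_incr; lra).
  assert (0 < (1 + e) ^ 2) by (apply pow_lt; lra).
  assert (0 < a0 * a2) by nra. assert (0 < a1 ^ 2) by (apply pow_lt; lra).
  split.
  - replace (a1 ^ 2 / (a0 * a2) / (1 + e) ^ 2) with (a1 ^ 2 / (a0 * a2 * (1 + e) ^ 2)) by (field; lra).
    unfold Rdiv. apply Rmult_le_compat; [lra | left; apply Rinv_0_lt_compat; nra | lra |].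
    apply Rinv_le_contravar; lra.
  - replace (a1 ^ 2 / (a0 * a2) * (1 + e) ^ 2) with (a1 ^ 2 * (1 + e) ^ 2 / (a0 * a2)) by (field; lra).
    unfold Rdiv. apply Rmult_le_compat; [nra | left; apply Rinv_0_lt_compat; lra | lra |].
    apply Rinv_le_contravar; lra.
Qed.

Lemma exists_mul_sq_lt A c : 0 < A -> A < c -> exists e, 0 < e /\ A * (1 + e) ^ 2 < c.
Proof.
  intros HA Hc. exists (Rmin 1 ((c - A) / (4 * A))).
  assert (He1 := Rmin_l 1 ((c - A) / (4 * A))). assert (He2 := Rmin_r 1 ((c - A) / (4 * A))).
  set (e := Rmin 1 ((c - A) / (4 * A))) in *.
  assert (He : 0 < e) by (apply Rmin_pos; [lra | apply Rdiv_lt_0_compat; lra]).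
  split; [easy|].
  assert (A * e <= (c - A) / 4).
  { apply (Rmult_le_compat_l A) in He2; [|lra].
    replace (A * ((c - A) / (4 * A))) with ((c - A) / 4) in He2 by (field; lra). easy. }
  simpl. nra.
Qed.

Lemma exists_div_sq_gt A c : 0 < A -> c < A -> exists e, 0 < e /\ c < A / (1 + e) ^ 2.
Proof.
  intros HA Hc. destruct (Rle_or_lt c 0) as [Hc0 | Hc0].
  - exists 1. split; [lra|]. assert (0 < A / (1 + 1) ^ 2) by (apply Rdiv_lt_0_compat; simpl; lra). lra.
  - destruct (exists_mul_sq_lt c A Hc0 Hc) as [e [He Hlt]]. exists e. split; [easy|].
    assert (0 < (1 + e) ^ 2) by (apply pow_lt; lra).
    apply (Rmult_lt_reg_r ((1 + e) ^ 2)); [easy|].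
    replace (A / (1 + e) ^ 2 * (1 + e) ^ 2) with A by (field; lra). easy.
Qed.

Lemma psi2_ratio_sharp_lower m c : (2 <= m)%nat ->
  (INR (S m) - 2) / (INR (S m) - 1) < c -> exists x, 0 < x /\ psi2_ratio (S m) x < c.
Proof.
  intros Hm Hc. destruct m as [|[|p]]; [lia | lia|].
  assert (Hp : 0 <= INR p) by apply pos_INR.
  set (A := (INR p + 1) / (INR p + 2)).
  replace ((INR (S (S (S p))) - 2) / (INR (S (S (S p))) - 1)) with A in Hc
    by (unfold A; rewrite !S_INR; field; lra).
  destruct (exists_mul_sq_lt A c ltac:(unfold A; apply Rdiv_lt_0_compat; lra) Hc) as [e [He Hlt]].
  set (K := (INR p + 3) * (INR p + 6)).
  set (x := Rmax 1 (K / e) + 1).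
  assert (Hx1 := Rmax_l 1 (K / e)). assert (HxK := Rmax_r 1 (K / e)).
  assert (HKx : K / x <= e).
  { apply (Rmult_le_reg_r x); [unfold x; lra|].
    replace (K / x * x) with K by (field; unfold x; lra).
    apply (Rmult_le_reg_r (/ e)); [apply Rinv_0_lt_compat; lra|].
    replace (e * x * / e) with x by (field; lra). unfold x, Rdiv in *. lra. }
  assert (Hx : 1 <= x) by (unfold x; lra).
  exists x. split; [lra|]. rewrite psi2_ratio_eq by (lra || lia).
  assert (Hbound : forall k, (k <= S (S p))%nat ->
    INR (fact k) / x ^ S k <= psi2_abs (S (S k)) x <= INR (fact k) / x ^ S k * (1 + e)).
  { intros k Hk. destruct (psi2_abs_large_x x k Hx) as [Hlow Hup]. split; [easy|].
    eapply Rle_trans; [exact Hup|]. apply Rmult_le_compat_l.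
    - apply Rlt_le, Rdiv_lt_0_compat; [apply INR_fact_lt_0 | apply pow_lt; lra].
    - assert (HkK : (INR k + 1) * (INR k + 4) <= K).
      { assert (Hkp : INR k <= INR (S (S p))) by (apply le_INR; easy). rewrite !S_INR in Hkp.
        assert (0 <= INR k) by apply pos_INR. unfold K. nra. }
      assert ((INR k + 1) * (INR k + 4) / x <= K / x)
        by (unfold Rdiv; apply Rmult_le_compat_r; [left; apply Rinv_0_lt_compat|]; lra).
      lra. }
  assert (Hpos : forall k, 0 < INR (fact k) / x ^ S k)
    by (intros k; apply Rdiv_lt_0_compat; [apply INR_fact_lt_0 | apply pow_lt; lra]).
  destruct (ratio_sq_bounds _ _ _ _ _ _ e (Hpos p) (Hpos (S p)) (Hpos (S (S p))) ltac:(lra)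
              (Hbound p ltac:(lia)) (Hbound (S p) ltac:(lia)) (Hbound (S (S p)) (le_n _)))
    as [_ Hup].
  eapply Rle_lt_trans; [exact Hup|].
  rewrite fact_pow_ratio by lra. easy.
Qed.

Lemma psi2_ratio_sharp_upper m c : (2 <= m)%nat ->
  c < INR (S m) / (INR (S m) + 1) -> exists x, 0 < x /\ c < psi2_ratio (S m) x.
Proof.
  intros Hm Hc. assert (Hm0 : 0 <= INR m) by apply pos_INR.
  set (A := (INR m + 1) / (INR m + 2)).
  replace (INR (S m) / (INR (S m) + 1)) with A in Hc by (unfold A; rewrite S_INR; field; lra).
  destruct (exists_div_sq_gt A c ltac:(unfold A; apply Rdiv_lt_0_compat; lra) Hc) as [e [He Hgt]].
  set (D M := 2 * Series (psi2_term 1 (S M))).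
  assert (HD : forall M, (2 <= M)%nat -> 0 <= D M).
  { intros M HM. assert (H := Series_psi2_term_bounds 1 (S M) ltac:(lra) ltac:(lia)).
    rewrite pow1, Rinv_1 in H. unfold D. lra. }
  set (Dsum := D m + D (S m) + D (S (S m))).
  assert (HD0 := HD m Hm). assert (HD1 := HD (S m) ltac:(lia)). assert (HD2 := HD (S (S m)) ltac:(lia)).
  assert (HDsum : 0 <= Dsum) by (unfold Dsum; lra).
  assert (HDle : D m <= Dsum /\ D (S m) <= Dsum /\ D (S (S m)) <= Dsum) by (unfold Dsum; lra).
  clearbody Dsum.
  assert (Hx1 := Rmin_l 1 (e / (Dsum + 1))). assert (Hxe := Rmin_r 1 (e / (Dsum + 1))).
  assert (Hx : 0 < Rmin 1 (e / (Dsum + 1))) by (apply Rmin_pos; [lra | apply Rdiv_lt_0_compat; lra]).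
  set (x := Rmin 1 (e / (Dsum + 1))) in *.
  assert (HDx : Dsum * x <= e).
  { apply Rle_trans with (Dsum * (e / (Dsum + 1))); [apply Rmult_le_compat_l; lra|].
    apply (Rmult_le_reg_r (Dsum + 1)); [lra|].
    replace (Dsum * (e / (Dsum + 1)) * (Dsum + 1)) with (Dsum * e) by (field; lra).
    nra. }
  exists x. split; [easy|]. rewrite psi2_ratio_eq by easy.
  assert (Hbound : forall M, (m <= M <= S (S m))%nat ->
    INR (fact M) / x ^ S M <= psi2_abs M x <= INR (fact M) / x ^ S M * (1 + e)).
  { intros M HM. destruct (psi2_abs_small_x x M ltac:(lra) ltac:(lia)) as [Hlow Hup].
    split; [easy|]. eapply Rle_trans; [exact Hup|]. apply Rmult_le_compat_l.
    - apply Rlt_le, Rdiv_lt_0_compat; [apply INR_fact_lt_0 | apply pow_lt; lra].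
    - fold (D M). assert (D M <= Dsum).
      { destruct (Nat.eq_dec M m) as [-> | H1]; [easy|].
        destruct (Nat.eq_dec M (S m)) as [-> | H2]; [easy|].
        replace M with (S (S m)) by lia. easy. }
      nra. }
  assert (Hpos : forall M, 0 < INR (fact M) / x ^ S M)
    by (intros M; apply Rdiv_lt_0_compat; [apply INR_fact_lt_0 | apply pow_lt; lra]).
  destruct (ratio_sq_bounds _ _ _ _ _ _ e (Hpos m) (Hpos (S m)) (Hpos (S (S m))) ltac:(lra)
              (Hbound m ltac:(lia)) (Hbound (S m) ltac:(lia)) (Hbound (S (S m)) ltac:(lia)))
    as [Hlow _].
  eapply Rlt_le_trans; [|exact Hlow].
  rewrite fact_pow_ratio by easy. easy.
Qed.

Theorem corollary3p3 (n : nat) (hn : (3 <= n)%nat) :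
  (forall x : R, 0 < x ->
     (INR n - 2) / (INR n - 1) < psi2_ratio n x /\
     psi2_ratio n x < INR n / (INR n + 1)) /\
  (forall c : R, (INR n - 2) / (INR n - 1) < c ->
     exists x : R, 0 < x /\ psi2_ratio n x < c) /\
  (forall c : R, c < INR n / (INR n + 1) ->
     exists x : R, 0 < x /\ c < psi2_ratio n x).
Proof.
  destruct n as [|m]; [lia|]. assert (Hm : (2 <= m)%nat) by lia.
  split; [|split].
  - intros x Hx. apply psi2_ratio_bounds; easy.
  - intros c Hc. apply psi2_ratio_sharp_lower; easy.
  - intros c Hc. apply psi2_ratio_sharp_upper; easy.
Qed.
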